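(* Fix $\beta\in(1,2)$ and let $Y=(Y_s)_{s\in\mathbb Z_{\ge0}}$ be the discrete-time random walk on the weighted graph described in the context, run in stationarity, and let $\mathcal C=\mathbb N^+=\{1,2,3,\dots\}$. Then $\mathbf P[Y_0\in\mathcal C]=1/2$ and, as $t\to\infty$, $$\mathbf P\big[Y_s\in\mathcal C\ \ \forall s\in\{0,1,\dots,t\}\big]=t^{\frac{1-\beta}{2}+o(1)}.$$
   Context: The graph has vertex set $\mathbb Z^*=\mathbb Z\setminus\{0\}$ and edges: nearest-neighbour edges $\{n,n+1\}$ and $\{-(n+1),-n\}$ for $n\ge1$, the edge $\{-1,1\}$, and a self-loop at every vertex. Conductances: $c_{n,n+1}=c_{-(n+1),-n}=n^{-\beta}$ for $n\ge1$; $c_{-1,1}=c_{1,1}=c_{-1,-1}=1/2$; and for $|n|\ge2$ the self-loop conductance is $c_{n,n}=c_{n,n-1}+c_{n,n+1}$ (conductance of the two edges at $n$). The walk moves from $x$ to $y$ with probability $c_{x,y}/\pi(x)$, where $\pi(x)=\sum_y c_{x,y}$ (self-loop counted once); $\pi$ has finite total mass and the walk is run started from the normalized $\pi$. $\mathbf P$ is the law of this stationary walk. *)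

From Stdlib Require Import Reals ZArith List Lra.
Import ListNotations.
Open Scope R_scope.

(* Vertices of Z^* = Z \ {0} are represented by integers (0 is never used:
   all conductances involving 0 vanish). *)

Definition edge_c (beta : R) (x y : Z) : R :=
  if ((1 <=? x)%Z && (y =? x + 1)%Z)%bool then Rpower (IZR x) (- beta)
  else if ((1 <=? y)%Z && (x =? y + 1)%Z)%bool then Rpower (IZR y) (- beta)
  else if ((x <=? -1)%Z && (y =? x - 1)%Z)%bool then Rpower (IZR (- x)) (- beta)
  else if ((y <=? -1)%Z && (x =? y - 1)%Z)%bool then Rpower (IZR (- y)) (- beta)
  else if (((x =? -1)%Z && (y =? 1)%Z) || ((x =? 1)%Z && (y =? -1)%Z))%bool then 1/2
  else 0.

Definition cond (beta : R) (x y : Z) : R :=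
  if (x =? 0)%Z then 0
  else if (y =? 0)%Z then 0
  else if (x =? y)%Z then
    (if ((x =? 1)%Z || (x =? -1)%Z)%bool then 1/2
     else edge_c beta x (x - 1) + edge_c beta x (x + 1))
  else edge_c beta x y.

(* The list of all neighbours y of x in Z^* (including x itself via the
   self-loop); every y outside this list has cond beta x y = 0. *)
Definition nbrs (x : Z) : list Z :=
  if (x =? 1)%Z then [-1; 1; 2]%Z
  else if (x =? -1)%Z then [-2; -1; 1]%Z
  else [x - 1; x; x + 1]%Z.

(* pi(x) = sum_y c_{x,y} (self-loop counted once). *)
Definition piw (beta : R) (x : Z) : R :=
  fold_right Rplus 0 (map (fun y => cond beta x y) (nbrs x)).

Definition trans (beta : R) (x y : Z) : R := cond beta x y / piw beta x.

Definition inC (x : Z) : bool := (1 <=? x)%Z.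

(* stay beta t x = P_x[ Y_s \in C for all s in {0,...,t} ]
   (probability for the walk started at x), via the Markov property:
   stay 0 x = 1_C(x), stay (t+1) x = 1_C(x) * sum_y p(x,y) stay t y. *)
Fixpoint stay (beta : R) (t : nat) (x : Z) : R :=
  match t with
  | O => if inC x then 1 else 0
  | S t' => if inC x then
              fold_right Rplus 0 (map (fun y => trans beta x y * stay beta t' y) (nbrs x))
            else 0
  end.

(* Total mass of pi over Z^*, enumerated as n+1 and -(n+1), n : nat. *)
Definition pi_pair (beta : R) (n : nat) : R :=
  piw beta (Z.of_nat n + 1)%Z + piw beta (- (Z.of_nat n + 1))%Z.

From Stdlib Require Import Reals ZArith List Lra Lia.
Import ListNotations.
Open Scope R_scope.

(* Since C is left only through the edge {1,-1}, the probability stay_t(x) of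
   staying in C during [0,t] satisfies, for x >= 2, a one-step recursion with
   the kernel moving x to x-1, x, x+1 with probabilities p_down, 1/2, p_up,
   while from 1 the walk is killed with probability 1/4.  The stationary
   weights are pi(x) ~ 4 |x|^(-b), and P[survive up to t] is proportional to
   the series sum_x pi(x) stay_t(x).
   - Lower bound: 1/x is harmonic up to O(x^-3) (doubling of the conductances),
     whence 1 - stay_t(x) <= K/x + 4t/K^2; with K ~ sqrt t every start
     x >~ sqrt t survives with probability 1/2, and the block of vertices of
     size ~ sqrt t there carries mass ~ t^((1-b)/2).
   - Upper bound: the Lyapunov function x^2 + 6 decreases on average by
     (b-1)/4 per step (inward drift (b-1)/x), so stay_t(x) <= (x^2+6)(1/F + O(t^-k))
     for every order k; summing up to radius R = t^(1/2 - 3/(2k)) and bounding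
     the tail mass by R^(1-b) gives t^((1-b)/2 + 3/(2k)). *)

Ltac zsimpl := repeat match goal with
 | |- context [Z.eqb ?a ?b] => destruct (Z.eqb_spec a b); try lia
 | |- context [Z.leb ?a ?b] => destruct (Z.leb_spec a b); try lia
 end; simpl.

(* [cw b x = x^(-b)] is the conductance of the edge {x, x+1} for x >= 1. *)
Definition cw (b : R) (x : Z) : R := Rpower (IZR x) (- b).

Lemma cw_pos b x : 0 < cw b x.
Proof. apply exp_pos. Qed.

Lemma cw_1 b : cw b 1 = 1.
Proof. unfold cw, Rpower. rewrite ln_1, Rmult_0_r. apply exp_0. Qed.

Lemma cond_pos_side b x : (2 <= x)%Z ->
  cond b x (x-1) = cw b (x-1) /\ cond b x x = cw b (x-1) + cw b x /\
  cond b x (x+1) = cw b x.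
Proof.
  intros H. unfold cond, edge_c, cw. repeat split; zsimpl.
  all: try (f_equal; f_equal; lia).
Qed.

Lemma nbrs_pos_side x : (2 <= x)%Z -> nbrs x = [x-1; x; x+1]%Z.
Proof. intros H. unfold nbrs. zsimpl. reflexivity. Qed.

Lemma piw_pos_side b x : (2 <= x)%Z -> piw b x = 2 * (cw b (x-1) + cw b x).
Proof.
  intros H. unfold piw. rewrite nbrs_pos_side by lia. simpl.
  destruct (cond_pos_side b x H) as [E1 [E2 E3]]. rewrite E1, E2, E3. ring.
Qed.

Lemma piw_1 b : piw b 1 = 2.
Proof.
  unfold piw, nbrs, cond, edge_c. simpl. change (Rpower 1 (- b)) with (cw b 1).
  rewrite cw_1. lra.
Qed.

(* The graph is symmetric under x |-> -x, hence so is the stationary weight. *)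
Lemma piw_sym b x : (1 <= x)%Z -> piw b (-x) = piw b x.
Proof.
  intros H. destruct (Z.eq_dec x 1) as [->|Hx].
  - rewrite piw_1. unfold piw, nbrs, cond, edge_c. simpl.
    change (Rpower 1 (- b)) with (cw b 1). rewrite cw_1. field.
  - rewrite (piw_pos_side b x) by lia. unfold piw, nbrs. zsimpl. unfold cond, edge_c, cw. zsimpl.
    all: (try replace (- - x)%Z with x by lia);
         (try replace (- (- x + 1))%Z with (x-1)%Z by lia); ring.
Qed.

Lemma stay_nonpos b t x : (x <= 0)%Z -> stay b t x = 0.
Proof. intros H. destruct t; simpl; unfold inC; zsimpl; reflexivity. Qed.

(* Transition probabilities x -> x-1 and x -> x+1 for x >= 2 (the holding
   probability is 1/2 because of the self-loop). *)
Definition p_down b x := cw b (x-1) / (2 * (cw b (x-1) + cw b x)).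
Definition p_up b x := cw b x / (2 * (cw b (x-1) + cw b x)).

Lemma p_down_up b x : p_down b x + p_up b x = /2.
Proof.
  unfold p_down, p_up. pose proof (cw_pos b (x-1)). pose proof (cw_pos b x). field. lra.
Qed.

Lemma p_down_pos b x : 0 < p_down b x.
Proof.
  unfold p_down. pose proof (cw_pos b (x-1)). pose proof (cw_pos b x).
  apply Rdiv_lt_0_compat; lra.
Qed.

Lemma p_up_pos b x : 0 < p_up b x.
Proof.
  unfold p_up. pose proof (cw_pos b (x-1)). pose proof (cw_pos b x).
  apply Rdiv_lt_0_compat; lra.
Qed.

Lemma stay_succ b t x : (2 <= x)%Z ->
  stay b (S t) x =
  p_down b x * stay b t (x-1) + /2 * stay b t x + p_up b x * stay b t (x+1).
Proof.
  intros H. simpl. unfold inC. zsimpl. rewrite nbrs_pos_side by lia. simpl.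
  unfold trans. destruct (cond_pos_side b x H) as [E1 [E2 E3]].
  rewrite E1, E2, E3, piw_pos_side by lia.
  unfold p_down, p_up. pose proof (cw_pos b (x-1)). pose proof (cw_pos b x). field. lra.
Qed.

(* At the boundary point 1 the walk is killed (jumps to -1) with probability 1/4. *)
Lemma stay_succ_1 b t : stay b (S t) 1 = /4 * stay b t 1 + /2 * stay b t 2.
Proof.
  simpl stay at 1. unfold inC. simpl. unfold trans. rewrite piw_1.
  unfold nbrs. simpl. rewrite (stay_nonpos b t (-1)) by lia.
  unfold cond, edge_c; simpl. change (Rpower 1 (- b)) with (cw b 1). rewrite cw_1. field.
Qed.

Lemma stay_bounds b t : forall x, 0 <= stay b t x <= 1.
Proof.
  induction t as [|t IH]; intros x.
  - simpl. destruct (inC x); lra.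
  - destruct (Z_lt_le_dec x 1).
    + rewrite stay_nonpos by lia. lra.
    + destruct (Z.eq_dec x 1) as [->|Hn].
      * rewrite stay_succ_1. pose proof (IH 1%Z). pose proof (IH 2%Z). lra.
      * rewrite stay_succ by lia. pose proof (p_down_up b x).
        pose proof (p_down_pos b x). pose proof (p_up_pos b x).
        pose proof (IH (x-1)%Z). pose proof (IH x). pose proof (IH (x+1)%Z). nra.
Qed.

Lemma div_nonneg a d : 0 <= a -> 0 < d -> 0 <= a / d.
Proof. intros; unfold Rdiv; apply Rmult_le_pos; [|left; apply Rinv_0_lt_compat]; auto. Qed.

Lemma exp_le x y : x <= y -> exp x <= exp y.
Proof. intros [H|H]. - left; apply exp_increasing; auto. - subst; lra. Qed.

Lemma ln_le_pred y : 0 < y -> ln y <= y - 1.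
Proof. intros H. pose proof (exp_ineq1_le (ln y)). rewrite exp_ln in H0 by lra. lra. Qed.

Lemma Rpower_pos x y : 0 < Rpower x y.
Proof. apply exp_pos. Qed.

Lemma Rpower_ge_square q b : 0 < q <= 1 -> b <= 2 -> q * q <= Rpower q b.
Proof.
  intros Hq Hb. replace (q*q) with (Rpower q 2).
  2:{ replace 2 with (INR 2) by (simpl; lra). rewrite Rpower_pow by lra. simpl; ring. }
  unfold Rpower. apply exp_le. assert (ln q <= 0) by (pose proof (ln_le_pred q); lra). nra.
Qed.

Lemma Rpower_bernoulli_upper q s : 0 < q -> 0 <= s -> Rpower q s * (1 + s*(1-q)) <= 1.
Proof.
  intros Hq Hs. unfold Rpower.
  assert (Hln : exp (s * ln q) <= exp (- (s*(1-q)))).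
  { apply exp_le. pose proof (ln_le_pred q); nra. }
  assert (Hinv : exp (- (s*(1-q))) * exp (s*(1-q)) = 1).
  { rewrite <- exp_plus. replace (- (s * (1 - q)) + s * (1 - q)) with 0 by ring. apply exp_0. }
  pose proof (exp_ineq1_le (s*(1-q))). pose proof (exp_pos (s * ln q)).
  pose proof (exp_pos (- (s*(1-q)))).
  destruct (Rle_lt_dec 0 (1 + s*(1-q))); [|nra].
  apply Rle_trans with (exp (- (s * (1 - q))) * (1 + s*(1-q))).
  - apply Rmult_le_compat_r; lra.
  - apply Rle_trans with (exp (- (s * (1 - q))) * exp (s*(1-q))).
    + apply Rmult_le_compat_l; lra.
    + lra.
Qed.

Lemma Rpower_bernoulli_lower q s : 0 < q -> 0 <= s -> 1 + s*(1-q) <= Rpower q (-s).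
Proof.
  intros Hq Hs. unfold Rpower. eapply Rle_trans; [|apply exp_ineq1_le].
  pose proof (ln_le_pred q). nra.
Qed.

Lemma Rpower_base_antitone a a' e : 0 < a <= a' -> e <= 0 -> Rpower a' e <= Rpower a e.
Proof.
  intros Ha He. unfold Rpower. apply exp_le.
  assert (ln a <= ln a').
  { destruct (Req_dec a a'). - subst; lra. - left; apply ln_increasing; lra. }
  nra.
Qed.

Lemma Rpower_eventually_ge C e : 0 < e ->
  exists T : nat, forall t : nat, (T <= t)%nat -> C <= Rpower (INR t) e.
Proof.
  intros He. destruct (INR_unbounded (Rpower (Rabs C + 1) (/e))) as [T HT].
  exists T. intros t Ht. apply le_INR in Ht.
  pose proof (Rpower_pos (Rabs C + 1) (/ e)).
  apply Rle_trans with (Rpower (Rpower (Rabs C + 1) (/ e)) e).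
  - rewrite Rpower_mult. replace (/e * e) with 1 by (field; lra). rewrite Rpower_1.
    + pose proof (Rle_abs C). lra.
    + pose proof (Rabs_pos C). lra.
  - apply Rle_Rpower_l; lra.
Qed.

Lemma floor_exists w : 0 <= w -> exists m : nat, INR m <= w < INR m + 1.
Proof.
  intros Hw. destruct (INR_unbounded w) as [n Hn]. induction n.
  - simpl in Hn. lra.
  - destruct (Rle_lt_dec (INR n) w).
    + exists n. rewrite S_INR in Hn. lra.
    + apply IHn. lra.
Qed.

Section Conductances.
Variable b : R.
Hypothesis hb : 1 < b < 2.

Lemma cw_ratio x : (2 <= x)%Z -> cw b x = cw b (x-1) * Rpower ((IZR x - 1)/IZR x) b.
Proof.
  intros H. assert (HX: 2 <= IZR x) by (apply IZR_le; lia).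
  unfold cw. rewrite minus_IZR, !Rpower_Ropp.
  replace (IZR x - 1) with (IZR x * ((IZR x - 1)/IZR x)) at 1 by (field; lra).
  rewrite <- Rpower_mult_distr by (try apply Rdiv_lt_0_compat; lra).
  pose proof (Rpower_pos (IZR x) b). pose proof (Rpower_pos ((IZR x - 1)/IZR x) b).
  field. split; lra.
Qed.

Lemma ratio_bounds x : (2 <= x)%Z -> 0 < (IZR x - 1)/IZR x <= 1 /\ /2 <= (IZR x - 1)/IZR x.
Proof.
  intros H. assert (HX: 2 <= IZR x) by (apply IZR_le; lia).
  repeat split.
  - apply Rdiv_lt_0_compat; lra.
  - apply Rmult_le_reg_r with (IZR x). lra. unfold Rdiv. rewrite Rmult_assoc, Rinv_l; lra.
  - apply Rmult_le_reg_r with (IZR x). lra. unfold Rdiv. rewrite Rmult_assoc, Rinv_l; lra.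
Qed.

Lemma cw_antitone x y : (1 <= x)%Z -> (x <= y)%Z -> cw b y <= cw b x.
Proof.
  intros H1 H2. unfold cw. rewrite !Rpower_Ropp. apply Rinv_le_contravar.
  - apply Rpower_pos.
  - apply Rle_Rpower_l. lra. split; [apply IZR_lt|apply IZR_le]; lia.
Qed.

(* Since b <= 2, consecutive conductances differ at most by the factor ((x-1)/x)^2. *)
Lemma cw_step_lower x : (2 <= x)%Z -> (IZR x - 2)/IZR x * cw b (x-1) <= cw b x.
Proof.
  intros H. assert (HX: 2 <= IZR x) by (apply IZR_le; lia).
  destruct (ratio_bounds x H) as [Hq _].
  rewrite (cw_ratio x H). pose proof (Rpower_ge_square _ b Hq ltac:(lra)).
  pose proof (cw_pos b (x-1)). rewrite Rmult_comm. apply Rmult_le_compat_l; [lra|].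
  eapply Rle_trans; [|eassumption].
  replace ((IZR x - 1) / IZR x * ((IZR x - 1) / IZR x))
    with ((IZR x - 2)/IZR x + / (IZR x * IZR x)) by (field; lra).
  assert (0 < / (IZR x * IZR x)) by (apply Rinv_0_lt_compat; nra). lra.
Qed.

Lemma cw_step_doubling x : (2 <= x)%Z -> cw b (x-1) <= 4 * cw b x.
Proof.
  intros H. destruct (ratio_bounds x H) as [Hq Hq2].
  rewrite (cw_ratio x H). pose proof (Rpower_ge_square _ b Hq ltac:(lra)).
  pose proof (cw_pos b (x-1)). assert (/4 <= Rpower ((IZR x - 1)/IZR x) b) by nra. nra.
Qed.

(* Since b > 1, conductances decay fast enough to give the walk an inward drift
   of order (b-1)/x: this is the sharp form used for the Lyapunov function. *)
Lemma cw_step_drift x : (2 <= x)%Z -> cw b x * (IZR x + (b-1)) <= cw b (x-1) * (IZR x - 1).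
Proof.
  intros H. assert (HX: 2 <= IZR x) by (apply IZR_le; lia).
  destruct (ratio_bounds x H) as [Hq _]. set (q := (IZR x - 1)/IZR x) in *.
  rewrite (cw_ratio x H). fold q.
  replace (Rpower q b) with (q * Rpower q (b-1)).
  2:{ replace b with (1 + (b-1)) at 2 by ring. rewrite Rpower_plus, Rpower_1 by lra. reflexivity. }
  pose proof (Rpower_bernoulli_upper q (b-1) ltac:(lra) ltac:(lra)) as HB.
  assert (Hq1 : 1 - q = / IZR x) by (unfold q; field; lra).
  assert (Hqx : q * IZR x = IZR x - 1) by (unfold q; field; lra).
  rewrite Hq1 in HB. pose proof (cw_pos b (x-1)). pose proof (Rpower_pos q (b-1)).
  assert (Hpow : Rpower q (b-1) * (IZR x + (b-1)) <= IZR x).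
  { replace (IZR x + (b-1)) with (IZR x * (1 + (b-1) * / IZR x)) by (field; lra). nra. }
  rewrite <- Hqx.
  replace (cw b (x - 1) * (q * Rpower q (b - 1)) * (IZR x + (b - 1)))
    with ((cw b (x-1) * q) * (Rpower q (b - 1) * (IZR x + (b - 1)))) by ring.
  replace (cw b (x - 1) * (q * IZR x)) with ((cw b (x-1) * q) * IZR x) by ring.
  apply Rmult_le_compat_l; [nra|lra].
Qed.

(* [tail_pot y = y^(1-b)] telescopes the conductances: sum_{y > m} x^(-b) <= m^(1-b)/(b-1). *)
Definition tail_pot (y : Z) : R := Rpower (IZR y) (1 - b).

Lemma cw_telescope y : (2 <= y)%Z -> (b - 1) * cw b y <= tail_pot (y-1) - tail_pot y.
Proof.
  intros H. assert (HX: 2 <= IZR y) by (apply IZR_le; lia).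
  destruct (ratio_bounds y H) as [Hq _]. set (q := (IZR y - 1)/IZR y) in *.
  unfold tail_pot, cw. rewrite minus_IZR.
  replace (IZR y - 1) with (IZR y * q) by (unfold q; field; lra).
  rewrite <- Rpower_mult_distr by lra.
  replace (1 - b) with (- (b-1)) at 2 by ring.
  pose proof (Rpower_bernoulli_lower q (b-1) ltac:(lra) ltac:(lra)) as HB.
  assert (Hq1 : 1 - q = / IZR y) by (unfold q; field; lra). rewrite Hq1 in HB.
  assert (E : Rpower (IZR y) (- b) = Rpower (IZR y) (1 - b) * / IZR y).
  { replace (- b) with ((1-b) + (- (1))) by ring.
    rewrite Rpower_plus, Rpower_Ropp, Rpower_1 by lra. reflexivity. }
  rewrite E. pose proof (Rpower_pos (IZR y) (1-b)).
  replace ((b - 1) * (Rpower (IZR y) (1 - b) * / IZR y))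
    with (Rpower (IZR y) (1 - b) * ((b-1) * / IZR y)) by ring.
  rewrite <- (Rmult_1_r (Rpower (IZR y) (1 - b))) at 3. rewrite <- Rmult_minus_distr_l.
  apply Rmult_le_compat_l; lra.
Qed.

Lemma square_cw_le x M : (1 <= x)%Z -> IZR x <= M -> IZR x * IZR x * cw b x <= Rpower M (2 - b).
Proof.
  intros H HM. assert (HX: 1 <= IZR x) by (apply IZR_le; lia).
  unfold cw. replace (IZR x * IZR x) with (Rpower (IZR x) 2).
  2:{ replace 2 with (INR 2) by (simpl; lra). rewrite Rpower_pow by lra. simpl; ring. }
  rewrite <- Rpower_plus. replace (2 + - b) with (2 - b) by ring.
  apply Rle_Rpower_l; lra.
Qed.

End Conductances.

Definition avg (b : R) (x : Z) (f : Z -> R) : R :=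
  p_down b x * f (x-1)%Z + /2 * f x + p_up b x * f (x+1)%Z.

Lemma stay_succ_avg b t x : (2 <= x)%Z -> stay b (S t) x = avg b x (stay b t).
Proof. intros H. rewrite stay_succ by exact H. reflexivity. Qed.

Lemma avg_mono b x f g :
  f (x-1)%Z <= g (x-1)%Z -> f x <= g x -> f (x+1)%Z <= g (x+1)%Z ->
  avg b x f <= avg b x g.
Proof.
  intros H1 H2 H3. unfold avg. pose proof (p_down_pos b x). pose proof (p_up_pos b x).
  apply Rplus_le_compat; [apply Rplus_le_compat|]; apply Rmult_le_compat_l; lra.
Qed.

(* The kernel is stochastic, so averaging commutes with affine maps. *)
Lemma avg_affine b x f al be : avg b x (fun y => al * f y + be) = al * avg b x f + be.
Proof.
  unfold avg. assert (E : p_up b x = /2 - p_down b x) by (pose proof (p_down_up b x); lra).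
  rewrite E. cbv beta. field.
Qed.

(* Lower bound.  The function x |-> 1/x is harmonic up to an error of order x^(-3):
   thanks to the doubling property of the conductances the drift towards 0 only
   contributes at that order. *)
Lemma avg_inverse b (hb : 1 < b < 2) x : (2 <= x)%Z ->
  avg b x (fun y => / IZR y) <= / IZR x + 2 / (IZR x * (IZR x * IZR x - 1)).
Proof.
  intros Hx. assert (HX: 2 <= IZR x) by (apply IZR_le; lia).
  unfold avg. rewrite minus_IZR, plus_IZR.
  pose proof (cw_step_lower b hb x Hx) as HL. pose proof (cw_pos b (x-1)). pose proof (cw_pos b x).
  unfold p_down, p_up.
  set (A := cw b (x-1)) in *. set (B := cw b x) in *. set (X := IZR x) in *.
  assert (HL' : (X-2) * A <= X * B).
  { apply Rmult_le_compat_l with (r := X) in HL; [|lra].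
    replace (X * ((X - 2) / X * A)) with ((X-2)*A) in HL by (field; lra). lra. }
  assert (HN : A*(X+1) - B*(X-1) <= 4 * A) by (apply Rmult_le_reg_r with X; nra).
  assert (HP : 0 < 2*(A+B)*X*(X*X-1)) by (repeat apply Rmult_lt_0_compat; nra).
  replace (A / (2 * (A + B)) * / (X - 1) + / 2 * / X + B / (2 * (A + B)) * / (X + 1))
    with (/ X + (A*(X+1) - B*(X-1)) / (2*(A+B)*X*(X*X-1))) by (field; repeat split; nra).
  apply Rplus_le_compat_l. unfold Rdiv.
  apply Rle_trans with (4*(A+B) * / (2 * (A + B) * X * (X * X - 1))).
  - apply Rmult_le_compat_r. left; apply Rinv_0_lt_compat; exact HP. lra.
  - right. field. repeat split; nra.
Qed.

Lemma avg_barrier b (hb : 1 < b < 2) x K : (2 <= x)%Z -> 1 <= K -> K < IZR x ->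
  K * avg b x (fun y => / IZR y) <= K / IZR x + 4 / (K*K).
Proof.
  intros Hx HK HKX. set (X := IZR x) in *. assert (HX : 2 <= X) by (apply IZR_le; lia).
  pose proof (avg_inverse b hb x Hx) as HI. fold X in HI.
  assert (HF : K * (2 / (X*(X*X-1))) <= 4 / (K*K)).
  { replace (K * (2 / (X * (X * X - 1)))) with (4*K / (2*(X*(X*X-1)))) by (field; split; nra).
    apply Rle_trans with (4*K / (K*K*K)).
    - unfold Rdiv. apply Rmult_le_compat_l. lra. apply Rinv_le_contravar. nra.
      pose proof (pow_incr K X 3 ltac:(lra)). simpl in H. nra.
    - right. field. lra. }
  apply Rle_trans with (K * (/ X + 2 / (X * (X * X - 1)))).
  - apply Rmult_le_compat_l; lra.
  - unfold Rdiv at 1. lra.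
Qed.

Lemma escape_bound b (hb : 1 < b < 2) K (HK : 1 <= K) :
  forall t x, (1 <= x)%Z -> 1 - stay b t x <= K / IZR x + 4 * INR t / (K*K).
Proof.
  assert (HKK : 0 < K*K) by nra.
  induction t as [|t IH]; intros x Hx.
  - simpl. unfold inC. replace ((1 <=? x)%Z) with true by (symmetry; apply Z.leb_le; lia).
    assert (0 < IZR x) by (apply IZR_lt; lia).
    assert (0 <= K / IZR x) by (apply div_nonneg; lra).
    replace (4 * INR 0 / (K*K)) with 0 by (simpl; field; lra). lra.
  - assert (HX : 1 <= IZR x) by (apply IZR_le; lia).
    pose proof (pos_INR t). rewrite S_INR.
    destruct (Rle_lt_dec 1 (K / IZR x + 4 * (INR t + 1) / (K*K))) as [Hc|Hc].
    { pose proof (stay_bounds b (S t) x). lra. }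
    assert (H4 : 0 <= 4 * (INR t + 1) / (K*K)) by (apply div_nonneg; lra).
    assert (HKX : K < IZR x).
    { apply Rmult_lt_reg_r with (/ IZR x). apply Rinv_0_lt_compat; lra.
      rewrite Rinv_r by lra. unfold Rdiv in Hc. lra. }
    assert (Hx2 : (2 <= x)%Z) by (assert (1 < x)%Z by (apply lt_IZR; lra); lia).
    set (e := 4 * INR t / (K*K)).
    rewrite stay_succ_avg by exact Hx2.
    replace (1 - avg b x (stay b t)) with (avg b x (fun y => -1 * stay b t y + 1))
      by (rewrite avg_affine; ring).
    apply Rle_trans with (avg b x (fun y => K * / IZR y + e)).
    + apply avg_mono; cbv beta.
      * pose proof (IH (x-1)%Z ltac:(lia)). unfold e, Rdiv in *. lra.
      * pose proof (IH x Hx). unfold e, Rdiv in *. lra.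
      * pose proof (IH (x+1)%Z ltac:(lia)). unfold e, Rdiv in *. lra.
    + rewrite avg_affine. pose proof (avg_barrier b hb x K Hx2 HK HKX).
      replace (4 * (INR t + 1) / (K*K)) with (e + 4/(K*K)) by (unfold e; field; lra). lra.
Qed.

(* Upper bound.  The Lyapunov function x^2 + 6 decreases on average by (b-1)/4 at
   every step inside C: the inward drift (b-1)/x beats the variance. *)
Definition lyap (x : Z) : R := IZR x * IZR x + 6.

Lemma lyap_ge_7 x : (1 <= x)%Z -> 7 <= lyap x.
Proof. intros H. unfold lyap. assert (1 <= IZR x) by (apply IZR_le; lia). nra. Qed.

Lemma avg_lyap b (hb : 1 < b < 2) x : (2 <= x)%Z -> avg b x lyap <= lyap x - (b-1)/4.
Proof.
  intros Hx. assert (HX: 2 <= IZR x) by (apply IZR_le; lia).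
  pose proof (cw_step_drift b hb x Hx) as HD. pose proof (cw_pos b (x-1)). pose proof (cw_pos b x).
  unfold avg, lyap, p_down, p_up. rewrite minus_IZR, plus_IZR.
  set (A := cw b (x-1)) in *. set (B := cw b x) in *. set (X := IZR x) in *.
  set (s := b - 1).
  assert (Hk : B * (2*X + 1 + s/2) <= A * (2*X - 1 - s/2)).
  { apply Rmult_le_reg_l with (X - 1). lra.
    assert (0 <= B * (s*X - s/2 - s*s/2 + 1)) by (apply Rmult_le_pos; unfold s in *; nra).
    assert ((X-1) * (A * (2*X - 1 - s/2)) >= B*(X+s)*(2*X-1-s/2)).
    { replace ((X-1) * (A * (2*X - 1 - s/2))) with ((A*(X-1)) * (2*X-1-s/2)) by ring.
      apply Rle_ge. apply Rmult_le_compat_r. unfold s in *; lra. fold s in HD. lra. }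
    nra. }
  apply Rmult_le_reg_r with (2*(A+B)). lra.
  replace ((A / (2 * (A + B)) * ((X - 1) * (X - 1) + 6) + / 2 * (X * X + 6) +
    B / (2 * (A + B)) * ((X + 1) * (X + 1) + 6)) * (2 * (A + B)))
    with (A * ((X - 1) * (X - 1) + 6) + (A+B) * (X * X + 6) + B * ((X + 1) * (X + 1) + 6))
    by (field; lra).
  unfold s in *. nra.
Qed.

Lemma lyapunov_step b (hb : 1 < b < 2) t G x : 0 <= G -> (1 <= x)%Z ->
  (forall y, (1 <= y)%Z -> stay b t y <= lyap y * G) ->
  stay b (S t) x <= (lyap x - (b-1)/4) * G.
Proof.
  intros HG Hx Hind. destruct (Z.eq_dec x 1) as [->|Hn].
  - rewrite stay_succ_1. pose proof (Hind 1%Z ltac:(lia)). pose proof (Hind 2%Z ltac:(lia)).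
    unfold lyap in *. simpl IZR in *. nra.
  - rewrite stay_succ_avg by lia.
    apply Rle_trans with (avg b x (fun y => G * lyap y + 0)).
    + apply avg_mono; cbv beta; rewrite Rplus_0_r, Rmult_comm; apply Hind; lia.
    + rewrite avg_affine. pose proof (avg_lyap b hb x ltac:(lia)). nra.
Qed.

Lemma pow_bernoulli y k : 0 <= y <= 1 -> 1 - INR k * y <= (1 - y) ^ k.
Proof.
  intros Hy. induction k as [|k IH]; [simpl; lra|]. rewrite S_INR. simpl.
  assert (0 <= (1-y)^k) by (apply pow_le; lra). pose proof (pos_INR k). nra.
Qed.

(* The profile (1/7) (k/(k + eta t))^k decays like t^(-k) and absorbs a factor
   (1 - eta) at each step. *)
Definition decay (k : nat) (eta : R) (t : nat) : R := /7 * (INR k / (INR k + eta * INR t)) ^ k.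

Lemma decay_nonneg k eta t : (1 <= k)%nat -> 0 <= eta -> 0 <= decay k eta t.
Proof.
  intros Hk He. unfold decay. assert (1 <= INR k) by (apply (le_INR 1); auto).
  pose proof (pos_INR t). apply Rmult_le_pos. lra. apply pow_le. apply div_nonneg; nra.
Qed.

Lemma decay_step k eta t : (1 <= k)%nat -> 0 < eta ->
  (1 - eta) * decay k eta t <= decay k eta (S t).
Proof.
  intros Hk He. unfold decay. rewrite S_INR.
  assert (HK : 1 <= INR k) by (apply (le_INR 1); auto). pose proof (pos_INR t).
  set (u := INR k + eta * INR t).
  assert (Hu : INR k <= u) by (unfold u; nra).
  replace (INR k / (INR k + eta * (INR t + 1))) with ((INR k / u) * (1 - eta / (u + eta)))
    by (unfold u; field; nra).
  rewrite Rpow_mult_distr.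
  assert (0 <= (INR k / u) ^ k) by (apply pow_le; apply div_nonneg; lra).
  assert (Hb : 1 - eta <= (1 - eta / (u + eta)) ^ k).
  { assert (Hy : 0 <= eta / (u + eta) <= 1).
    { split. apply div_nonneg; lra. unfold Rdiv. apply Rmult_le_reg_r with (u+eta). lra.
      rewrite Rmult_assoc, Rinv_l by lra. lra. }
    eapply Rle_trans; [|apply (pow_bernoulli _ _ Hy)].
    assert (INR k * (eta / (u+eta)) <= eta).
    { unfold Rdiv. rewrite <- Rmult_assoc. apply Rmult_le_reg_r with (u + eta). lra.
      rewrite Rmult_assoc, Rinv_l, Rmult_1_r by lra. nra. }
    lra. }
  nra.
Qed.

Lemma decay_le k eta t : (1 <= k)%nat -> 0 < eta -> 1 <= INR t ->
  decay k eta t <= /7 * (INR k / (eta * INR t)) ^ k.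
Proof.
  intros Hk He Ht. unfold decay. apply Rmult_le_compat_l. lra. apply pow_incr.
  assert (1 <= INR k) by (apply (le_INR 1); auto). split. apply div_nonneg; nra.
  unfold Rdiv. apply Rmult_le_compat_l. lra. apply Rinv_le_contravar; nra.
Qed.

Lemma survival_upper b (hb : 1 < b < 2) F0 k (HF : 1 <= F0) (Hk : (1 <= k)%nat) :
  forall t x, (1 <= x)%Z -> stay b t x <= lyap x * (/F0 + decay k ((b-1)/4/F0) t).
Proof.
  set (d := (b-1)/4). set (eta := d / F0).
  assert (He : 0 < eta) by (unfold eta, d; apply Rdiv_lt_0_compat; lra).
  assert (HiF : 0 < /F0 <= 1).
  { split. apply Rinv_0_lt_compat; lra. rewrite <- Rinv_1. apply Rinv_le_contravar; lra. }
  induction t as [|t IH]; intros x Hx.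
  - simpl. unfold inC. replace ((1 <=? x)%Z) with true by (symmetry; apply Z.leb_le; lia).
    unfold decay. simpl INR. rewrite Rmult_0_r, Rplus_0_r.
    assert (1 <= INR k) by (apply (le_INR 1); auto).
    replace (INR k / INR k) with 1 by (field; lra). rewrite pow1.
    pose proof (lyap_ge_7 x Hx). nra.
  - pose proof (decay_nonneg k eta t Hk ltac:(lra)).
    pose proof (decay_nonneg k eta (S t) Hk ltac:(lra)).
    pose proof (lyap_ge_7 x Hx).
    destruct (Rle_lt_dec 1 (lyap x * (/ F0 + decay k eta (S t)))) as [Hc|Hc].
    { pose proof (stay_bounds b (S t) x). lra. }
    assert (HfF : lyap x < F0).
    { apply Rmult_lt_reg_r with (/ F0). lra. rewrite Rinv_r by lra. nra. }
    set (G := / F0 + decay k eta t).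
    pose proof (lyapunov_step b hb t G x ltac:(unfold G; lra) Hx IH) as Hst. fold d in Hst.
    assert (Hdrift : lyap x - d <= lyap x * (1 - eta)).
    { assert (lyap x * eta <= d).
      { unfold eta, Rdiv. rewrite <- Rmult_assoc. apply Rmult_le_reg_r with F0. lra.
        rewrite Rmult_assoc, Rinv_l by lra. unfold d; nra. }
      lra. }
    pose proof (decay_step k eta t Hk He).
    assert (Heta : eta <= 1) by (unfold eta, d, Rdiv; nra).
    apply Rle_trans with (lyap x * ((1 - eta) * G)).
    + rewrite <- Rmult_assoc. eapply Rle_trans; [exact Hst|].
      apply Rmult_le_compat_r; [unfold G|]; lra.
    + apply Rmult_le_compat_l; unfold G; nra.
Qed.

Definition wt (b : R) (n : nat) : R := piw b (Z.of_nat n + 1).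

Lemma wt_0 b : wt b 0 = 2.
Proof. apply piw_1. Qed.

Lemma wt_succ b n : (1 <= n)%nat -> wt b n = 2 * (cw b (Z.of_nat n) + cw b (Z.of_nat n + 1)).
Proof.
  intros H. unfold wt. rewrite piw_pos_side by lia.
  replace (Z.of_nat n + 1 - 1)%Z with (Z.of_nat n) by lia. reflexivity.
Qed.

Lemma wt_pos b n : 0 < wt b n.
Proof.
  destruct n. - rewrite wt_0; lra.
  - rewrite wt_succ by lia. pose proof (cw_pos b (Z.of_nat (S n))).
    pose proof (cw_pos b (Z.of_nat (S n) + 1)). lra.
Qed.

Lemma pi_pair_wt b n : pi_pair b n = 2 * wt b n.
Proof. unfold pi_pair, wt. rewrite piw_sym by lia. ring. Qed.

Lemma wt_ge_cw b n : 2 * cw b (Z.of_nat n + 1) <= wt b n.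
Proof.
  destruct n. - rewrite wt_0. simpl. rewrite cw_1. lra.
  - rewrite wt_succ by lia. pose proof (cw_pos b (Z.of_nat (S n))). lra.
Qed.

Lemma wt_le_cw b (hb : 1 < b < 2) n : wt b n <= 10 * cw b (Z.of_nat n + 1).
Proof.
  destruct n. - rewrite wt_0. simpl. rewrite cw_1. lra.
  - rewrite wt_succ by lia. pose proof (cw_step_doubling b hb (Z.of_nat (S n) + 1) ltac:(lia)).
    replace (Z.of_nat (S n) + 1 - 1)%Z with (Z.of_nat (S n)) in H by lia.
    pose proof (cw_pos b (Z.of_nat (S n) + 1)). lra.
Qed.

Lemma wt_le_cw_pred b (hb : 1 < b < 2) n : (1 <= n)%nat -> wt b n <= 4 * cw b (Z.of_nat n).
Proof.
  intros Hn. rewrite wt_succ by lia.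
  pose proof (cw_antitone b hb (Z.of_nat n) (Z.of_nat n + 1) ltac:(lia) ltac:(lia)). lra.
Qed.

Lemma sum_telescoping_bound a D m : (forall n, 0 <= a n) -> (forall n, 0 <= D n) ->
  (forall n, (S m <= n)%nat -> a n <= D n - D (S n)) ->
  forall N, sum_f_R0 a N <= sum_f_R0 a m + D (S m).
Proof.
  intros Ha HD H N. destruct (le_lt_dec N m) as [HN|HN].
  - pose proof (HD (S m)).
    assert (sum_f_R0 a N <= sum_f_R0 a m); [|lra].
    clear -Ha HN. induction HN as [|m' _ IH]; [lra|]. simpl. pose proof (Ha (S m')). lra.
  - rewrite (tech2 a m N HN).
    assert (Htel : forall j, sum_f_R0 (fun i => a (S m + i)%nat) j <= D (S m) - D (S (S m + j))).
    { induction j as [|j IHj]; simpl in *.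
      - rewrite Nat.add_0_r. apply H. lia.
      - pose proof (H (S (m + S j)) ltac:(lia)).
        replace (S (m + S j)) with (S (S (m + j))) in * by lia. lra. }
    pose proof (Htel (N - S m)%nat). pose proof (HD (S (S m + (N - S m)))). lra.
Qed.

Lemma sum_le_const a m K : (forall n, (n <= m)%nat -> a n <= K) -> sum_f_R0 a m <= INR (S m) * K.
Proof.
  intros H. induction m; simpl sum_f_R0. - pose proof (H 0%nat (le_n 0)). simpl. lra.
  - assert (sum_f_R0 a m <= INR (S m) * K) by (apply IHm; intros; apply H; lia).
    pose proof (H (S m) (le_n _)). rewrite (S_INR (S m)). lra.
Qed.

Lemma sum_ge_const a m K : (forall n, (n <= m)%nat -> K <= a n) -> INR (S m) * K <= sum_f_R0 a m.
Proof.
  intros H. induction m; simpl sum_f_R0. - pose proof (H 0%nat (le_n 0)). simpl. lra.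
  - assert (INR (S m) * K <= sum_f_R0 a m) by (apply IHm; intros; apply H; lia).
    pose proof (H (S m) (le_n _)). rewrite (S_INR (S m)). lra.
Qed.

Lemma IZR_succ_nat n : IZR (Z.of_nat n + 1) = INR n + 1.
Proof. rewrite plus_IZR, <- INR_IZR_INZ. reflexivity. Qed.

Section Masses.
Variable b : R.
Hypothesis hb : 1 < b < 2.

Definition tail_mass (n : nat) : R := 4 / (b - 1) * tail_pot b (Z.of_nat n - 1).

Lemma tail_mass_nonneg n : 0 <= tail_mass n.
Proof. unfold tail_mass. apply Rmult_le_pos. apply div_nonneg; lra. left; apply Rpower_pos. Qed.

Lemma wt_telescope n : (2 <= n)%nat -> wt b n <= tail_mass n - tail_mass (S n).
Proof.
  intros Hn. pose proof (wt_le_cw_pred b hb n ltac:(lia)).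
  pose proof (cw_telescope b hb (Z.of_nat n) ltac:(lia)).
  unfold tail_mass. replace (Z.of_nat (S n) - 1)%Z with (Z.of_nat n) by lia.
  set (u := tail_pot b (Z.of_nat n - 1)) in *. set (v := tail_pot b (Z.of_nat n)) in *.
  replace (4 / (b - 1) * u - 4 / (b - 1) * v) with (4 * ((u - v) / (b-1))) by (field; lra).
  enough (cw b (Z.of_nat n) <= (u - v) / (b - 1)) by lra.
  apply Rmult_le_reg_l with (b-1). lra. replace ((b - 1) * ((u - v) / (b - 1))) with (u - v)
    by (field; lra). lra.
Qed.

(* Total positive mass is finite: this is where b > 1 is used. *)
Lemma wt_sum_bound N : sum_f_R0 (wt b) N <= sum_f_R0 (wt b) 1 + tail_mass 2.
Proof.
  apply (sum_telescoping_bound (wt b) tail_mass 1).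
  - intros; left; apply wt_pos.
  - apply tail_mass_nonneg.
  - intros; apply wt_telescope; lia.
Qed.

Lemma tail_mass_bound m : (1 <= m)%nat ->
  tail_mass (S m) <= 8 / (b-1) * Rpower (INR m + 1) (1 - b).
Proof.
  intros Hm. unfold tail_mass, tail_pot. replace (Z.of_nat (S m) - 1)%Z with (Z.of_nat m) by lia.
  rewrite <- INR_IZR_INZ.
  replace (8 / (b - 1) * Rpower (INR m + 1) (1 - b))
    with (4 / (b-1) * (2 * Rpower (INR m + 1) (1-b))) by (field; lra).
  apply Rmult_le_compat_l. apply div_nonneg; lra.
  assert (Hm1 : 1 <= INR m) by (apply (le_INR 1) in Hm; simpl in Hm; lra).
  apply Rle_trans with (Rpower ((INR m + 1) * /2) (1 - b)).
  - apply Rpower_base_antitone; lra.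
  - rewrite <- Rpower_mult_distr by lra. rewrite Rmult_comm.
    apply Rmult_le_compat_r. left; apply Rpower_pos.
    replace (Rpower (/2) (1-b)) with (Rpower 2 (b-1)).
    + replace 2 with (Rpower 2 1) at 2 by (apply Rpower_1; lra). apply Rle_Rpower; lra.
    + unfold Rpower. f_equal. rewrite ln_Rinv by lra. ring.
Qed.

End Masses.

Section SurvivalMass.
Variable b : R.
Hypothesis hb : 1 < b < 2.

Definition mass_term (t n : nat) : R := wt b n * stay b t (Z.of_nat n + 1).

Lemma mass_term_nonneg t n : 0 <= mass_term t n.
Proof. unfold mass_term. apply Rmult_le_pos. left; apply wt_pos. apply stay_bounds. Qed.

Lemma mass_term_le_wt t n : mass_term t n <= wt b n.
Proof.
  unfold mass_term. pose proof (stay_bounds b t (Z.of_nat n + 1)). pose proof (wt_pos b n). nra.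
Qed.

Lemma stay_ge_half t x : 4 * (4 * sqrt (INR t) + 1) <= IZR x -> /2 <= stay b t x.
Proof.
  intros Hx. set (K := 4 * sqrt (INR t) + 1) in *.
  pose proof (sqrt_pos (INR t)). assert (HK : 1 <= K) by (unfold K; lra).
  assert (HK2 : 16 * INR t <= K*K).
  { unfold K. pose proof (sqrt_sqrt (INR t) (pos_INR t)). nra. }
  assert (Hx1 : (1 <= x)%Z) by (apply le_IZR; lra).
  pose proof (escape_bound b hb K HK t x Hx1).
  assert (K / IZR x <= /4).
  { apply Rmult_le_reg_r with (IZR x). lra. unfold Rdiv. rewrite Rmult_assoc, Rinv_l by lra. lra. }
  assert (4 * INR t / (K*K) <= /4).
  { apply Rmult_le_reg_r with (K*K). nra. unfold Rdiv. rewrite Rmult_assoc, Rinv_l by nra. lra. }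
  lra.
Qed.

Lemma mass_partial_lower t m : 4 * (4 * sqrt (INR t) + 1) <= INR m + 2 ->
  (INR m + 1) * cw b (2 * Z.of_nat m + 2) <= sum_f_R0 (mass_term t) (S (m+m)).
Proof.
  intros Hm. rewrite (tech2 (mass_term t) m (S (m+m)) ltac:(lia)).
  replace (S (m + m) - S m)%nat with m by lia.
  pose proof (cond_pos_sum (mass_term t) m (mass_term_nonneg t)).
  enough ((INR m + 1) * cw b (2 * Z.of_nat m + 2) <= sum_f_R0 (fun j => mass_term t (S m + j)) m)
    by lra.
  rewrite <- S_INR. apply sum_ge_const. intros j Hj. unfold mass_term.
  set (x := (Z.of_nat (S m + j) + 1)%Z).
  assert (Hx : IZR x = INR (S m + j) + 1) by (unfold x; apply IZR_succ_nat).
  assert (INR m + 2 <= IZR x) by (rewrite Hx, plus_INR, S_INR; pose proof (pos_INR j); lra).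
  pose proof (stay_ge_half t x ltac:(lra)).
  pose proof (wt_ge_cw b (S m + j)). fold x in H2.
  pose proof (cw_antitone b hb x (2 * Z.of_nat m + 2) ltac:(unfold x; lia) ltac:(unfold x; lia)).
  pose proof (cw_pos b (2 * Z.of_nat m + 2)). pose proof (wt_pos b (S m + j)). nra.
Qed.

(* Choosing m ~ 16 sqrt t in the previous lemma. *)
Lemma mass_partial_lower_power t : 1 <= INR t -> exists N,
  / 80 * Rpower (INR t) ((1 - b)/2) <= sum_f_R0 (mass_term t) N.
Proof.
  intros Ht. set (K := 4 * sqrt (INR t) + 1).
  assert (Hs1 : 1 <= sqrt (INR t)) by (rewrite <- sqrt_1; apply sqrt_le_1_alt; lra).
  destruct (floor_exists (4*K - 2)) as [m0 [Hm1 Hm2]]; [unfold K; lra|].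
  set (m := S m0). assert (Hm3 : INR m = INR m0 + 1) by (unfold m; apply S_INR).
  exists (S (m+m)). eapply Rle_trans; [|apply mass_partial_lower; fold K; lra].
  unfold cw. replace (IZR (2 * Z.of_nat m + 2)) with (2 * INR m + 2)
    by (rewrite plus_IZR, mult_IZR, <- INR_IZR_INZ; reflexivity).
  pose proof (pos_INR m).
  replace ((INR m + 1) * Rpower (2 * INR m + 2) (- b)) with (/2 * Rpower (2 * INR m + 2) (1 - b))
    by (replace (1 - b) with (1 + - b) by ring; rewrite Rpower_plus, Rpower_1 by lra; field).
  (* 2m + 2 <= 40 sqrt t, so (2m+2)^(1-b) >= 40^(1-b) t^((1-b)/2) >= t^((1-b)/2) / 40 *)
  assert (Hle : Rpower (40 * sqrt (INR t)) (1 - b) <= Rpower (2 * INR m + 2) (1 - b)).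
  { apply Rpower_base_antitone; [|lra]. split. lra. unfold K in Hm1. lra. }
  rewrite <- Rpower_mult_distr, <- Rpower_sqrt, Rpower_mult in Hle by lra.
  replace (/ 2 * (1 - b)) with ((1-b)/2) in Hle by field.
  assert (H40 : /40 <= Rpower 40 (1 - b)).
  { replace (1 - b) with (- (b - 1)) by ring. rewrite Rpower_Ropp.
    apply Rinv_le_contravar. apply Rpower_pos.
    replace 40 with (Rpower 40 1) at 2 by (apply Rpower_1; lra). apply Rle_Rpower; lra. }
  pose proof (Rpower_pos (INR t) ((1-b)/2)). nra.
Qed.

Lemma head_term_bound t m k n : (1 <= k)%nat -> (n <= m)%nat ->
  let R := INR m + 1 in
  mass_term t n <= 70 * Rpower R (2-b) * (/(R*R+6) + decay k ((b-1)/4/(R*R+6)) t).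
Proof.
  intros Hk Hn R. set (F0 := R*R+6). set (G := / F0 + decay k ((b-1)/4/F0) t).
  assert (HF0 : 1 <= F0) by (unfold F0; nra).
  assert (HG : 0 <= G).
  { unfold G. pose proof (Rinv_0_lt_compat F0 ltac:(lra)).
    pose proof (decay_nonneg k ((b-1)/4/F0) t Hk ltac:(apply div_nonneg; lra)). lra. }
  pose proof (survival_upper b hb F0 k HF0 Hk t (Z.of_nat n + 1) ltac:(lia)) as U. fold G in U.
  unfold lyap in U. rewrite IZR_succ_nat in U.
  assert (HX : 1 <= INR n + 1) by (pose proof (pos_INR n); lra).
  assert (HXR : INR n + 1 <= R) by (unfold R; apply le_INR in Hn; lra).
  pose proof (square_cw_le b hb (Z.of_nat n + 1) R ltac:(lia)
                ltac:(rewrite IZR_succ_nat; lra)) as CM.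
  rewrite IZR_succ_nat in CM. pose proof (wt_le_cw b hb n) as HW.
  pose proof (wt_pos b n). pose proof (cw_pos b (Z.of_nat n + 1)).
  set (X := INR n + 1) in *. set (c := cw b (Z.of_nat n + 1)) in *.
  assert (Hwl : wt b n * (X*X+6) <= 70 * Rpower R (2 - b)).
  { apply Rle_trans with (10 * c * (7 * (X*X))). apply Rmult_le_compat; nra. nra. }
  unfold mass_term. apply Rle_trans with (wt b n * ((X * X + 6) * G)).
  - apply Rmult_le_compat_l; lra.
  - rewrite <- Rmult_assoc. apply Rmult_le_compat_r; lra.
Qed.

(* Splitting at radius R = m + 1: the head is controlled by the Lyapunov bound, the
   tail by the total stationary mass beyond R, which is of order R^(1-b). *)
Lemma mass_partial_upper t m k N : (1 <= m)%nat -> (1 <= k)%nat ->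
  let R := INR m + 1 in
  sum_f_R0 (mass_term t) N <=
  70 * Rpower R (1 - b) + 70 * (R*R*R) * decay k ((b-1)/4/(R*R+6)) t
  + 8/(b-1) * Rpower R (1-b).
Proof.
  intros Hm Hk R.
  assert (HR : 2 <= R) by (unfold R; apply (le_INR 1) in Hm; simpl in Hm; lra).
  set (F0 := R*R+6). set (B0 := decay k ((b-1)/4/F0) t).
  assert (HB0 : 0 <= B0) by (apply decay_nonneg; auto; apply div_nonneg; unfold F0; nra).
  eapply Rle_trans.
  { apply (sum_telescoping_bound (mass_term t) (tail_mass b) m (mass_term_nonneg t)
            (tail_mass_nonneg b hb)).
    intros n Hn. eapply Rle_trans; [apply mass_term_le_wt|]. apply wt_telescope; auto; lia. }
  apply Rplus_le_compat; [|apply tail_mass_bound; auto].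
  eapply Rle_trans; [apply sum_le_const; intros n Hn; apply (head_term_bound t m k n Hk Hn)|].
  fold R F0 B0. rewrite S_INR. fold R.
  assert (E1 : R * Rpower R (2 - b) = R * R * Rpower R (1-b)).
  { replace (2 - b) with (1 + (1 - b)) by ring. rewrite Rpower_plus, Rpower_1 by lra. ring. }
  assert (E2 : Rpower R (2 - b) <= R * R).
  { replace (R*R) with (Rpower R 2). apply Rle_Rpower; lra.
    replace 2 with (INR 2) by (simpl; lra). rewrite Rpower_pow by lra. simpl; ring. }
  pose proof (Rpower_pos R (1-b)). pose proof (Rpower_pos R (2-b)).
  replace (R * (70 * Rpower R (2 - b) * (/ F0 + B0))) with
    (70 * (R * Rpower R (2-b) * / F0) + 70 * (R * Rpower R (2-b)) * B0) by ring.
  apply Rplus_le_compat.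
  - apply Rmult_le_compat_l. lra. rewrite E1.
    apply Rmult_le_reg_r with F0. unfold F0; nra.
    rewrite Rmult_assoc, Rinv_l by (unfold F0; nra). unfold F0. nra.
  - apply Rmult_le_compat_r. lra. apply Rmult_le_compat_l. lra.
    replace (R*R*R) with (R * (R*R)) by ring. apply Rmult_le_compat_l; lra.
Qed.

(* Choice of radius R ~ t^(1/2 - d): the tail term R^(1-b) is then t^((1-b)/2 + o(1)). *)
Lemma radius_tail_bound t d R : 1 <= INR t -> 0 < d -> 2 <= R ->
  Rpower (INR t) (1/2 - d) <= 2 * R ->
  Rpower R (1 - b) <= 2 * Rpower (INR t) ((1 - b)/2 + d).
Proof.
  intros Ht Hd HR Hw. pose proof (Rpower_pos (INR t) (1/2 - d)).
  set (w := Rpower (INR t) (1/2 - d)) in *.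
  apply Rle_trans with (Rpower (w * /2) (1 - b)).
  - apply Rpower_base_antitone; fold w; lra.
  - rewrite <- Rpower_mult_distr by lra. unfold w. rewrite Rpower_mult.
    replace (Rpower (/2) (1-b)) with (Rpower 2 (b-1))
      by (unfold Rpower; f_equal; rewrite ln_Rinv by lra; ring).
    assert (Rpower 2 (b-1) <= 2).
    { replace 2 with (Rpower 2 1) at 2 by (apply Rpower_1; lra). apply Rle_Rpower; lra. }
    assert (Rpower (INR t) ((1/2 - d) * (1 - b)) <= Rpower (INR t) ((1 - b) / 2 + d))
      by (apply Rle_Rpower; nra).
    pose proof (Rpower_pos (INR t) ((1/2 - d) * (1-b))). pose proof (Rpower_pos 2 (b-1)). nra.
Qed.

(* With d = 3/(2k), the order-k decay t^(-k) R^(2k) of the profile beats the volume R^3. *)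
Lemma radius_decay_bound t k R : (1 <= k)%nat -> 1 <= INR t -> 2 <= R ->
  let d := 3 / (2 * INR k) in
  R <= Rpower (INR t) (1/2 - d) ->
  70 * (R * R * R) * decay k ((b-1)/4/(R*R+6)) t
  <= 10 * (28 * INR k / (b-1)) ^ k * Rpower (INR t) ((1 - b)/2 + d).
Proof.
  intros Hk Ht HR d Hw. set (th := 1/2 - d) in *. set (w := Rpower (INR t) th) in *.
  set (s := b - 1). set (eta := s / 4 / (R * R + 6)).
  assert (HK : 1 <= INR k) by (apply (le_INR 1) in Hk; simpl in Hk; lra).
  assert (Hd : 0 < d) by (unfold d; apply Rdiv_lt_0_compat; lra).
  assert (Heta : 0 < eta) by (unfold eta, s; apply Rdiv_lt_0_compat; [lra|nra]).
  assert (Hc : 0 < 28 * INR k / s) by (unfold s; apply Rdiv_lt_0_compat; lra).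
  assert (Hq : INR k / (eta * INR t) <= 28 * INR k / s * Rpower (INR t) (- (2 * d))).
  { assert (Hw2 : R * R <= Rpower (INR t) (2 * th)).
    { replace (2 * th) with (th + th) by ring. rewrite Rpower_plus. fold w. nra. }
    replace (- (2*d)) with (2*th + - (1)) by (unfold th; field).
    rewrite Rpower_plus, Rpower_Ropp, Rpower_1 by lra.
    unfold eta. replace (INR k / (s / 4 / (R * R + 6) * INR t))
      with (4 * INR k / s * (R*R+6) * / INR t) by (unfold s; field; repeat split; nra).
    replace (28 * INR k / s) with (4 * INR k / s * 7) by (unfold s; field; lra).
    rewrite !Rmult_assoc. apply Rmult_le_compat_l. unfold s; apply div_nonneg; lra.
    rewrite <- Rmult_assoc. apply Rmult_le_compat_r. left; apply Rinv_0_lt_compat; lra. nra. }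
  assert (Hpow : (INR k / (eta * INR t)) ^ k <= (28 * INR k / s) ^ k * Rpower (INR t) (- 3)).
  { eapply Rle_trans.
    - apply pow_incr. split; [apply div_nonneg; nra|exact Hq].
    - rewrite Rpow_mult_distr. apply Rmult_le_compat_l; [apply pow_le; lra|].
      rewrite <- Rpower_pow, Rpower_mult by apply Rpower_pos.
      right. f_equal. unfold d. field. lra. }
  assert (HR3 : R * R * R <= Rpower (INR t) (3 * th)).
  { replace (3 * th) with (th + th + th) by ring. rewrite !Rpower_plus. fold w.
    assert (R*R <= w*w) by nra. nra. }
  pose proof (decay_le k eta t Hk Heta Ht) as HD. pose proof (decay_nonneg k eta t Hk ltac:(lra)).
  assert (0 <= (28 * INR k / s) ^ k) by (apply pow_le; lra).
  apply Rle_trans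
    with (70 * Rpower (INR t) (3 * th) * (/7 * ((28 * INR k / s) ^ k * Rpower (INR t) (-3)))).
  { apply Rmult_le_compat; [nra|assumption|nra|].
    eapply Rle_trans; [exact HD|]. apply Rmult_le_compat_l; lra. }
  replace (70 * Rpower (INR t) (3 * th) * (/ 7 * ((28 * INR k / s) ^ k * Rpower (INR t) (-3))))
    with (10 * (28 * INR k / s) ^ k * (Rpower (INR t) (3 * th) * Rpower (INR t) (-3))) by field.
  rewrite <- Rpower_plus. apply Rmult_le_compat_l. nra. apply Rle_Rpower. lra. unfold th. lra.
Qed.

(* Choosing R = t^(1/2 - 3/(2k)) in [mass_partial_upper], with an explicit constant. *)
Definition upper_const (k : nat) : R := 140 + 16/(b-1) + 10 * (28 * INR k / (b-1)) ^ k.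

Lemma mass_partial_upper_power k t : (4 <= k)%nat -> 1 <= INR t ->
  2 <= Rpower (INR t) (1/2 - 3/(2 * INR k)) ->
  forall N, sum_f_R0 (mass_term t) N <=
    upper_const k * Rpower (INR t) ((1 - b)/2 + 3/(2 * INR k)).
Proof.
  intros Hk Ht Hw N.
  assert (HK : 4 <= INR k) by (apply (le_INR 4) in Hk; simpl in Hk; lra).
  set (d := 3/(2 * INR k)) in *. set (w := Rpower (INR t) (1/2 - d)) in *.
  assert (Hd : 0 < d) by (unfold d; apply Rdiv_lt_0_compat; lra).
  destruct (floor_exists (w - 1)) as [m [Hm1 Hm2]]; [lra|].
  assert (Hm : (1 <= m)%nat) by (destruct m; [simpl in Hm2; lra|lia]).
  pose proof (mass_partial_upper t m k N Hm ltac:(lia)) as UP. simpl in UP.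
  set (R := INR m + 1) in *.
  assert (HR : 2 <= R) by (unfold R; apply (le_INR 1) in Hm; simpl in Hm; lra).
  assert (HRw : R <= w <= 2 * R) by (assert (R = INR m + 1) by reflexivity; lra).
  pose proof (radius_tail_bound t d R Ht Hd HR (proj2 HRw)) as HA.
  pose proof (radius_decay_bound t k R ltac:(lia) Ht HR (proj1 HRw)) as HB. fold d in HB.
  set (P := Rpower (INR t) ((1 - b) / 2 + d)) in *.
  assert (0 <= 8 / (b-1)) by (apply div_nonneg; lra).
  eapply Rle_trans; [exact UP|]. unfold upper_const.
  replace ((140 + 16 / (b-1) + 10 * (28 * INR k / (b-1)) ^ k) * P)
    with (70 * (2 * P) + 10 * (28 * INR k / (b-1)) ^ k * P + 8/(b-1) * (2 * P))
    by (field; lra).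
  apply Rplus_le_compat; [apply Rplus_le_compat|]; try apply Rmult_le_compat_l; lra.
Qed.

End SurvivalMass.

Lemma infinite_sum_ext a a' l : (forall n, a n = a' n) -> infinite_sum a l -> infinite_sum a' l.
Proof.
  intros E H e He. destruct (H e He) as [N HN]. exists N. intros n Hn.
  rewrite <- (sum_eq a a' n) by auto. apply HN; auto.
Qed.

Lemma infinite_sum_scal a l k : infinite_sum a l -> infinite_sum (fun n => k * a n) (k * l).
Proof.
  intros H. apply (infinite_sum_ext (fun n => a n * k)); [intros; ring|].
  intros e He. destruct (CV_mult (fun _ => k) (sum_f_R0 a) k l) with (eps := e) as [N HN]; auto.
  - intros e' He'. exists 0%nat. intros. unfold Rdist. rewrite Rminus_diag, Rabs_R0. lra.
  - exists N. intros n Hn. rewrite <- scal_sum. apply HN; auto.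
Qed.

Lemma infinite_sum_le a l B : infinite_sum a l -> (forall N, sum_f_R0 a N <= B) -> l <= B.
Proof.
  intros H HB. apply (@Rle_cv_lim (sum_f_R0 a) (fun _ => B)); auto.
  intros e He. exists 0%nat. intros. unfold Rdist. rewrite Rminus_diag, Rabs_R0. lra.
Qed.

Lemma exponent_sandwich (f : nat -> R) a cl : 0 < cl ->
  (forall t, 1 <= INR t -> cl * Rpower (INR t) a <= f t) ->
  (forall d, 0 < d -> exists C T, forall t : nat, 1 <= INR t -> (T <= t)%nat ->
     f t <= C * Rpower (INR t) (a + d)) ->
  forall eps, 0 < eps -> exists T, forall t : nat, (1 <= t)%nat -> (T <= t)%nat ->
    Rpower (INR t) (a - eps) <= f t <= Rpower (INR t) (a + eps).
Proof.
  intros Hcl Hlow Hup eps Heps.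
  destruct (Rpower_eventually_ge (/ cl) eps Heps) as [T1 HT1].
  destruct (Hup (eps/2) ltac:(lra)) as [C [T2 HT2]].
  destruct (Rpower_eventually_ge C (eps/2) ltac:(lra)) as [T3 HT3].
  exists (max T1 (max T2 T3)). intros t Ht1 HtT.
  assert (Ht : 1 <= INR t) by (apply (le_INR 1) in Ht1; simpl in Ht1; lra).
  pose proof (HT1 t ltac:(lia)). pose proof (HT3 t ltac:(lia)).
  pose proof (Rpower_pos (INR t) a). pose proof (Rpower_pos (INR t) eps).
  pose proof (Rpower_pos (INR t) (a + eps/2)). split.
  - eapply Rle_trans; [|apply Hlow; exact Ht].
    replace (a - eps) with (a + - eps) by ring. rewrite Rpower_plus, Rpower_Ropp.
    rewrite Rmult_comm. apply Rmult_le_compat_r; [lra|].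
    rewrite <- (Rinv_inv cl). apply Rinv_le_contravar; [apply Rinv_0_lt_compat|]; lra.
  - eapply Rle_trans; [apply HT2; auto; lia|].
    replace (a + eps) with ((a + eps/2) + eps/2) by field. rewrite (Rpower_plus (a + eps/2)).
    rewrite Rmult_comm. apply Rmult_le_compat_l; lra.
Qed.

Section Stationary.
Variable b : R.
Hypothesis hb : 1 < b < 2.

Lemma wt_series : {l | infinite_sum (wt b) l}.
Proof.
  apply growing_cv.
  - intros n. simpl. pose proof (wt_pos b (S n)). lra.
  - exists (sum_f_R0 (wt b) 1 + tail_mass b 2). intros x [i ->]. apply (wt_sum_bound b hb).
Qed.

Definition half_mass : R := proj1_sig wt_series.
Definition total_mass : R := 2 * half_mass.

Lemma total_mass_series : infinite_sum (pi_pair b) total_mass.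
Proof.
  apply (infinite_sum_ext (fun n => 2 * wt b n)); [intros; symmetry; apply pi_pair_wt|].
  apply infinite_sum_scal. exact (proj2_sig wt_series).
Qed.

Lemma total_mass_pos : 0 < total_mass.
Proof.
  unfold total_mass, half_mass. destruct wt_series as [l Hl]; simpl.
  pose proof (sum_incr (wt b) 0 l Hl (fun n => Rlt_le _ _ (wt_pos b n))). simpl in H.
  rewrite wt_0 in H. lra.
Qed.

Lemma mass_series t : {l | infinite_sum (mass_term b t) l}.
Proof.
  apply (Rseries_CV_comp (mass_term b t) (wt b)); [|exact wt_series].
  intros n. split. apply mass_term_nonneg. apply mass_term_le_wt.
Qed.

Definition surv_mass (t : nat) : R := proj1_sig (mass_series t).
Definition surv_prob (t : nat) : R := surv_mass t / total_mass.

Lemma surv_prob_series t : infinite_sum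
  (fun n => piw b (Z.of_nat n + 1) / total_mass * stay b t (Z.of_nat n + 1)) (surv_prob t).
Proof.
  apply (infinite_sum_ext (fun n => / total_mass * mass_term b t n)).
  - intros n. unfold mass_term, wt, Rdiv. ring.
  - unfold surv_prob, Rdiv. rewrite Rmult_comm. apply infinite_sum_scal.
    exact (proj2_sig (mass_series t)).
Qed.

(* At time 0 the walk is in C exactly when it starts on the positive half line. *)
Lemma surv_prob_0 : surv_prob 0 = 1/2.
Proof.
  pose proof total_mass_pos. unfold surv_prob, surv_mass.
  destruct (mass_series 0) as [l Hl]; simpl.
  assert (E : l = half_mass).
  { apply (uniqueness_sum (wt b)); [|exact (proj2_sig wt_series)].
    apply (infinite_sum_ext (mass_term b 0)); [|exact Hl].
    intros n. unfold mass_term. simpl. unfold inC.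
    replace ((1 <=? Z.of_nat n + 1)%Z) with true by (symmetry; apply Z.leb_le; lia). ring. }
  rewrite E. unfold total_mass in *. field. lra.
Qed.

Lemma surv_prob_lower t : 1 <= INR t ->
  / (80 * total_mass) * Rpower (INR t) ((1 - b)/2) <= surv_prob t.
Proof.
  intros Ht. pose proof total_mass_pos. destruct (mass_partial_lower_power b hb t Ht) as [N HN].
  unfold surv_prob, surv_mass. destruct (mass_series t) as [l Hl]; simpl.
  pose proof (sum_incr (mass_term b t) N l Hl (mass_term_nonneg b t)).
  replace (/ (80 * total_mass) * Rpower (INR t) ((1 - b)/2))
    with ((/ 80 * Rpower (INR t) ((1 - b)/2)) / total_mass) by (field; lra).
  apply Rmult_le_compat_r; [left; apply Rinv_0_lt_compat|]; lra.
Qed.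

Lemma surv_prob_upper d : 0 < d -> exists C T, forall t : nat, 1 <= INR t -> (T <= t)%nat ->
  surv_prob t <= C * Rpower (INR t) ((1 - b)/2 + d).
Proof.
  intros Hd. pose proof total_mass_pos.
  destruct (INR_unbounded (3/d + 4)) as [k Hk].
  assert (Hd3 : 0 < 3/d) by (apply Rdiv_lt_0_compat; lra).
  assert (Hk4 : (4 <= k)%nat)
    by (destruct (le_lt_dec 4 k); auto; apply lt_INR in l; simpl in l; lra).
  assert (HK : 4 <= INR k) by (apply (le_INR 4) in Hk4; simpl in Hk4; lra).
  set (d' := 3 / (2 * INR k)).
  assert (Hd' : 0 < d' <= d).
  { unfold d'. split. apply Rdiv_lt_0_compat; lra.
    apply Rmult_le_reg_r with (2 * INR k). lra. unfold Rdiv. rewrite Rmult_assoc, Rinv_l by lra.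
    apply Rmult_lt_compat_l with (r := d) in Hk; [|lra].
    replace (d * (3/d + 4)) with (3 + 4 * d) in Hk by (field; lra). nra. }
  assert (Hd'8 : d' <= 3/8).
  { unfold d'. apply Rmult_le_reg_r with (2 * INR k). lra. unfold Rdiv.
    rewrite Rmult_assoc, Rinv_l by lra. nra. }
  destruct (Rpower_eventually_ge 2 (1/2 - d') ltac:(lra)) as [T HT].
  exists (upper_const b k / total_mass), T. intros t Ht HtT.
  unfold surv_prob, surv_mass. destruct (mass_series t) as [l Hl]; simpl.
  pose proof (infinite_sum_le _ _ _ Hl (mass_partial_upper_power b hb k t Hk4 Ht (HT t HtT))) as HU.
  fold d' in HU.
  assert (Rpower (INR t) ((1 - b) / 2 + d') <= Rpower (INR t) ((1 - b) / 2 + d))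
    by (apply Rle_Rpower; lra).
  assert (0 <= upper_const b k).
  { unfold upper_const. assert (0 <= 16 / (b-1)) by (apply div_nonneg; lra).
    assert (0 <= (28 * INR k / (b - 1)) ^ k) by (apply pow_le, div_nonneg; lra). lra. }
  unfold Rdiv. rewrite Rmult_comm, (Rmult_comm (upper_const b k)), Rmult_assoc.
  apply Rmult_le_compat_l; [left; apply Rinv_0_lt_compat; lra|].
  eapply Rle_trans; [exact HU|]. apply Rmult_le_compat_l; lra.
Qed.

End Stationary.

Theorem mainTheorem6 (beta : R) (hb : 1 < beta < 2) :
  exists (Ztot : R) (P : nat -> R),
    infinite_sum (pi_pair beta) Ztot /\ 0 < Ztot /\
    (forall t : nat,
       infinite_sum
         (fun n : nat => piw beta (Z.of_nat n + 1)%Z / Ztot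
                         * stay beta t (Z.of_nat n + 1)%Z) (P t)) /\
    P 0%nat = 1/2 /\
    (forall eps : R, 0 < eps ->
       exists T : nat, forall t : nat, (1 <= t)%nat -> (T <= t)%nat ->
         Rpower (INR t) ((1 - beta) / 2 - eps) <= P t <=
         Rpower (INR t) ((1 - beta) / 2 + eps)).
Proof.
  exists (total_mass beta hb), (surv_prob beta hb).
  split; [apply total_mass_series|].
  split; [apply total_mass_pos|].
  split; [apply surv_prob_series|].
  split; [apply surv_prob_0|].
  apply (exponent_sandwich _ _ (/ (80 * total_mass beta hb))).
  - pose proof (total_mass_pos beta hb). apply Rinv_0_lt_compat. lra.
  - apply surv_prob_lower.
  - apply surv_prob_upper.
Qed.
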